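(* Let $r_2$ be an admissible trajectory and $\tau,T,e=(e_1,e_2,e_3),u,z$ the fundamental fields on $G$. Then on $G$ $$\frac{\partial(\tau,T,e_1,e_2)}{\partial(t,x_1,x_2,x_3)}=z\,u^2\,e_3,$$ where $x_1,x_2,x_3$ are the coordinates of $r_1$. In particular this Jacobian is nonzero wherever $e_3\neq0$; analogous statements hold with $(e_1,e_2)$ replaced by any two of the three components of $e$.
   Context: Units with $c=1$. A function $r_2:\mathbb R\to\mathbb R^3$ is an admissible trajectory if it has continuous derivatives up to order 3, $|\dot r_2(t)|<1$ for all $t$, and for every $t_1$ one has $\sup_{u\le t_1}|\dot r_2(u)|<1$ and $\sup_{u\le t_1}|\ddot r_2(u)|<\infty$. The retarded time $\tau(r_1,t)$ is the unique $\tau\le t$ with $\tau=t-|r_1-r_2(\tau)|$; $T=t-\tau$; $G=\{(r_1,t):T(r_1,t)>0\}$; on $G$: $u=1/T$, $e=u(r_1-r_2(\tau))$, $v=\dot r_2\circ\tau$, $z=(1-\langle e,v\rangle)^{-1}$. *)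

From Stdlib Require Import Reals Lra.
Open Scope R_scope.

Record R3 := mkR3 { c1 : R; c2 : R; c3 : R }.

Definition sub3 (a b : R3) : R3 := mkR3 (c1 a - c1 b) (c2 a - c2 b) (c3 a - c3 b).
Definition scal3 (k : R) (a : R3) : R3 := mkR3 (k * c1 a) (k * c2 a) (k * c3 a).
Definition dot3 (a b : R3) : R := c1 a * c1 b + c2 a * c2 b + c3 a * c3 b.
Definition norm3 (a : R3) : R := sqrt (dot3 a a).

Definition C3_with (f f1 f2 f3 : R -> R) : Prop :=
  (forall t, derivable_pt_lim f t (f1 t)) /\
  (forall t, derivable_pt_lim f1 t (f2 t)) /\
  (forall t, derivable_pt_lim f2 t (f3 t)) /\
  continuity f3.

Definition admissible (r2 v a j : R -> R3) : Prop :=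
  C3_with (fun t => c1 (r2 t)) (fun t => c1 (v t)) (fun t => c1 (a t)) (fun t => c1 (j t)) /\
  C3_with (fun t => c2 (r2 t)) (fun t => c2 (v t)) (fun t => c2 (a t)) (fun t => c2 (j t)) /\
  C3_with (fun t => c3 (r2 t)) (fun t => c3 (v t)) (fun t => c3 (a t)) (fun t => c3 (j t)) /\
  (forall t, norm3 (v t) < 1) /\
  (forall t1, exists M, M < 1 /\ forall s, s <= t1 -> norm3 (v s) <= M) /\
  (forall t1, exists A, forall s, s <= t1 -> norm3 (a s) <= A).

(* tau is the retarded time: tau r1 t <= t and tau = t - |r1 - r2(tau)|
   (the paper shows this tau is unique). *)
Definition is_retarded_time (r2 : R -> R3) (tau : R3 -> R -> R) : Prop :=
  forall r1 t, tau r1 t <= t /\ tau r1 t = t - norm3 (sub3 r1 (r2 (tau r1 t))).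

Definition tauF (tau : R3 -> R -> R) (t x1 x2 x3 : R) : R := tau (mkR3 x1 x2 x3) t.
Definition TF (tau : R3 -> R -> R) (t x1 x2 x3 : R) : R := t - tauF tau t x1 x2 x3.
Definition uF (tau : R3 -> R -> R) (t x1 x2 x3 : R) : R := / TF tau t x1 x2 x3.
Definition eF (r2 : R -> R3) (tau : R3 -> R -> R) (t x1 x2 x3 : R) : R3 :=
  scal3 (uF tau t x1 x2 x3) (sub3 (mkR3 x1 x2 x3) (r2 (tauF tau t x1 x2 x3))).
Definition zF (r2 v : R -> R3) (tau : R3 -> R -> R) (t x1 x2 x3 : R) : R :=
  / (1 - dot3 (eF r2 tau t x1 x2 x3) (v (tauF tau t x1 x2 x3))).

Definition partial4 (g : R -> R -> R -> R -> R) (k : nat) (t x1 x2 x3 l : R) : Prop :=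
  match k with
  | O => derivable_pt_lim (fun s => g s x1 x2 x3) t l
  | 1%nat => derivable_pt_lim (fun s => g t s x2 x3) x1 l
  | 2%nat => derivable_pt_lim (fun s => g t x1 s x3) x2 l
  | 3%nat => derivable_pt_lim (fun s => g t x1 x2 s) x3 l
  | _ => False
  end.

Definition det3 (a b c d e f g h i : R) : R :=
  a * (e * i - f * h) - b * (d * i - f * g) + c * (d * h - e * g).

Definition det4 (M : nat -> nat -> R) : R :=
  M 0%nat 0%nat * det3 (M 1%nat 1%nat) (M 1%nat 2%nat) (M 1%nat 3%nat)
                       (M 2%nat 1%nat) (M 2%nat 2%nat) (M 2%nat 3%nat)
                       (M 3%nat 1%nat) (M 3%nat 2%nat) (M 3%nat 3%nat)
  - M 0%nat 1%nat * det3 (M 1%nat 0%nat) (M 1%nat 2%nat) (M 1%nat 3%nat)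
                       (M 2%nat 0%nat) (M 2%nat 2%nat) (M 2%nat 3%nat)
                       (M 3%nat 0%nat) (M 3%nat 2%nat) (M 3%nat 3%nat)
  + M 0%nat 2%nat * det3 (M 1%nat 0%nat) (M 1%nat 1%nat) (M 1%nat 3%nat)
                       (M 2%nat 0%nat) (M 2%nat 1%nat) (M 2%nat 3%nat)
                       (M 3%nat 0%nat) (M 3%nat 1%nat) (M 3%nat 3%nat)
  - M 0%nat 3%nat * det3 (M 1%nat 0%nat) (M 1%nat 1%nat) (M 1%nat 2%nat)
                       (M 2%nat 0%nat) (M 2%nat 1%nat) (M 2%nat 2%nat)
                       (M 3%nat 0%nat) (M 3%nat 1%nat) (M 3%nat 2%nat).

Definition jacF (r2 : R -> R3) (tau : R3 -> R -> R) (i : nat) : R -> R -> R -> R -> R :=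
  match i with
  | O => tauF tau
  | 1%nat => TF tau
  | 2%nat => fun t x1 x2 x3 => c1 (eF r2 tau t x1 x2 x3)
  | _ => fun t x1 x2 x3 => c2 (eF r2 tau t x1 x2 x3)
  end.

From Stdlib Require Import Reals Lra Lia Psatz.
Open Scope R_scope.

(* Along any line p |-> (t0 + al p, x + b p) through a point of G, the retarded
   time s(p) is Lipschitz, because |v| <= M < 1 in the past turns the defining
   relation s = t - |x - r2(s)| into |s(p) - s0| <= (|al| + |b|) |p| / (1 - M).
   Squaring that relation and comparing with p = 0 then shows that
   (1 - <e, v>) (s(p) - s0) - (al - <e, b>) p is quadratically small, so
   ds/dp = z (al - <e, b>).  The derivatives of T and of e follow by the chain
   and quotient rules, and the determinant of the resulting 4x4 matrix is the
   polynomial identity z u^2 e3. *)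

Lemma dot3_self_nonneg (p : R3) : 0 <= dot3 p p.
Proof. unfold dot3; nra. Qed.

Lemma norm3_nonneg (p : R3) : 0 <= norm3 p.
Proof. apply sqrt_pos. Qed.

Lemma norm3_sqr (p : R3) : norm3 p * norm3 p = dot3 p p.
Proof. apply sqrt_sqrt, dot3_self_nonneg. Qed.

Lemma norm3_le_of_sqr (p : R3) (A : R) : 0 <= A -> dot3 p p <= A * A -> norm3 p <= A.
Proof. intros HA Hp; rewrite <- (sqrt_square A HA); apply sqrt_le_1_alt, Hp. Qed.

Lemma dot3_sqr_le (p q : R3) : dot3 p q * dot3 p q <= dot3 p p * dot3 q q.
Proof.
  destruct p as [p1 p2 p3], q as [q1 q2 q3]; unfold dot3; simpl.
  (* Lagrange's identity *)
  pose proof (pow2_ge_0 (p1 * q2 - p2 * q1)); pose proof (pow2_ge_0 (p1 * q3 - p3 * q1));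
  pose proof (pow2_ge_0 (p2 * q3 - p3 * q2)).
  nra.
Qed.

Lemma Rabs_dot3_le (p q : R3) : Rabs (dot3 p q) <= norm3 p * norm3 q.
Proof.
  pose proof (norm3_nonneg p); pose proof (norm3_nonneg q).
  rewrite <- (Rabs_right (norm3 p * norm3 q)) by nra.
  apply Rsqr_le_abs_0; unfold Rsqr.
  replace (norm3 p * norm3 q * (norm3 p * norm3 q))
    with (norm3 p * norm3 p * (norm3 q * norm3 q)) by ring.
  rewrite !norm3_sqr; apply dot3_sqr_le.
Qed.

Lemma norm3_sub_le (p q : R3) : norm3 (sub3 p q) <= norm3 p + norm3 q.
Proof.
  pose proof (norm3_nonneg p); pose proof (norm3_nonneg q).
  pose proof (Rabs_dot3_le p q) as Hpq; rewrite <- Rabs_Ropp in Hpq.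
  pose proof (Rle_abs (- dot3 p q)).
  apply norm3_le_of_sqr; [lra|].
  replace (dot3 (sub3 p q) (sub3 p q)) with (dot3 p p - 2 * dot3 p q + dot3 q q)
    by (unfold dot3, sub3; simpl; ring).
  rewrite <- !norm3_sqr; nra.
Qed.

Lemma norm3_le_sub_add (p q : R3) : norm3 p <= norm3 (sub3 p q) + norm3 q.
Proof.
  pose proof (norm3_nonneg (sub3 p q)); pose proof (norm3_nonneg q).
  pose proof (Rabs_dot3_le (sub3 p q) q) as Hpq.
  pose proof (Rle_abs (dot3 (sub3 p q) q)).
  apply norm3_le_of_sqr; [lra|].
  replace (dot3 p p) with (dot3 (sub3 p q) (sub3 p q) + 2 * dot3 (sub3 p q) q + dot3 q q)
    by (unfold dot3, sub3; simpl; ring).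
  rewrite <- !norm3_sqr; nra.
Qed.

Lemma norm3_sub_comm (p q : R3) : norm3 (sub3 p q) = norm3 (sub3 q p).
Proof. unfold norm3; f_equal; unfold dot3, sub3; simpl; ring. Qed.

Lemma Rabs_norm3_sub_le (p q : R3) : Rabs (norm3 p - norm3 q) <= norm3 (sub3 p q).
Proof.
  pose proof (norm3_le_sub_add p q); pose proof (norm3_le_sub_add q p).
  rewrite (norm3_sub_comm q p) in *; apply Rabs_le; lra.
Qed.

Lemma norm3_scal_le (k : R) (p : R3) :
  norm3 (mkR3 (k * c1 p) (k * c2 p) (k * c3 p)) <= Rabs k * norm3 p.
Proof.
  apply norm3_le_of_sqr; [apply Rmult_le_pos; [apply Rabs_pos | apply norm3_nonneg]|].
  replace (Rabs k * norm3 p * (Rabs k * norm3 p)) with (Rabs k * Rabs k * (norm3 p * norm3 p))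
    by ring.
  rewrite <- Rabs_mult, Rabs_right, norm3_sqr by nra.
  unfold dot3; simpl; lra.
Qed.

Lemma dot3_derivable_pt_lim (r w : R -> R3) (d : R3) (x : R) :
  derivable_pt_lim (fun s => c1 (r s)) x (c1 (w x)) ->
  derivable_pt_lim (fun s => c2 (r s)) x (c2 (w x)) ->
  derivable_pt_lim (fun s => c3 (r s)) x (c3 (w x)) ->
  derivable_pt_lim (fun s => dot3 (r s) d) x (dot3 (w x) d).
Proof.
  intros H1 H2 H3.
  assert (Hscal : forall f l k, derivable_pt_lim f x l ->
            derivable_pt_lim (fun s => f s * k) x (l * k)).
  { intros f l k Hf.
    replace (l * k) with (l * fct_cte k x + f x * 0) by (unfold fct_cte; ring).
    apply (derivable_pt_lim_mult f (fct_cte k)); [exact Hf | apply derivable_pt_lim_const]. }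
  unfold dot3.
  apply (derivable_pt_lim_plus (fun s => c1 (r s) * c1 d + c2 (r s) * c2 d)
                               (fun s => c3 (r s) * c3 d)); [|auto].
  apply (derivable_pt_lim_plus (fun s => c1 (r s) * c1 d) (fun s => c2 (r s) * c2 d)); auto.
Qed.

Lemma norm3_sub_le_of_speed_le (r w : R -> R3) (t1 M : R) :
  (forall t, derivable_pt_lim (fun s => c1 (r s)) t (c1 (w t))) ->
  (forall t, derivable_pt_lim (fun s => c2 (r s)) t (c2 (w t))) ->
  (forall t, derivable_pt_lim (fun s => c3 (r s)) t (c3 (w t))) ->
  (forall s, s <= t1 -> norm3 (w s) <= M) ->
  forall x y, x <= t1 -> y <= t1 -> norm3 (sub3 (r x) (r y)) <= M * Rabs (x - y).
Proof.
  intros D1 D2 D3 HM.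
  assert (Hlt : forall x y, x < y -> y <= t1 -> norm3 (sub3 (r y) (r x)) <= M * (y - x)).
  { intros x y Hxy Hy.
    set (d := sub3 (r y) (r x)).
    destruct (MVT_cor2 (fun s => dot3 (r s) d) (fun s => dot3 (w s) d) x y Hxy)
      as [c [Hc Hcxy]].
    { intros c _; apply dot3_derivable_pt_lim; auto. }
    assert (Hdd : dot3 d d = dot3 (w c) d * (y - x)).
    { rewrite <- Hc; unfold d, dot3, sub3; simpl; ring. }
    pose proof (Rabs_dot3_le (w c) d); pose proof (Rle_abs (dot3 (w c) d)).
    pose proof (HM c ltac:(lra)); pose proof (norm3_nonneg d); pose proof (norm3_nonneg (w c)).
    rewrite <- norm3_sqr in Hdd.
    destruct (Req_dec (norm3 d) 0) as [Hd0|Hd0]; [rewrite Hd0; nra|].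
    apply (Rmult_le_reg_l (norm3 d)); [lra|].
    rewrite Hdd.
    apply Rle_trans with (norm3 (w c) * norm3 d * (y - x)); [apply Rmult_le_compat_r; lra|].
    replace (norm3 d * (M * (y - x))) with (M * norm3 d * (y - x)) by ring.
    apply Rmult_le_compat_r; [lra|]; apply Rmult_le_compat_r; lra. }
  intros x y Hx Hy; destruct (Rtotal_order x y) as [H|[H|H]].
  - rewrite norm3_sub_comm, Rabs_minus_sym, Rabs_right by lra; auto.
  - subst y; rewrite Rminus_diag, Rabs_R0, Rmult_0_r.
    apply norm3_le_of_sqr; [lra|]; unfold dot3, sub3; simpl; lra.
  - rewrite Rabs_right by lra; auto.
Qed.

Definition little_o0 (f : R -> R) : Prop :=
  forall eps, 0 < eps ->
    exists delta, 0 < delta /\ forall h, Rabs h < delta -> Rabs (f h) <= eps * Rabs h.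

Definition big_O0 (f : R -> R) : Prop :=
  exists K delta, 0 < delta /\ forall h, Rabs h < delta -> Rabs (f h) <= K * Rabs h.

Lemma little_o0_ext (f g : R -> R) : (forall h, f h = g h) -> little_o0 f -> little_o0 g.
Proof.
  intros E Hf eps Heps; destruct (Hf eps Heps) as [d [Hd Hfd]].
  exists d; split; [exact Hd|]; intros h Hh; rewrite <- E; auto.
Qed.

Lemma little_o0_add (f g : R -> R) :
  little_o0 f -> little_o0 g -> little_o0 (fun h => f h + g h).
Proof.
  intros Hf Hg eps Heps.
  destruct (Hf (eps / 2) ltac:(lra)) as [d1 [Hd1 Hf1]].
  destruct (Hg (eps / 2) ltac:(lra)) as [d2 [Hd2 Hg2]].
  exists (Rmin d1 d2); split; [apply Rmin_pos; lra|]; intros h Hh.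
  pose proof (Rmin_l d1 d2); pose proof (Rmin_r d1 d2).
  pose proof (Hf1 h ltac:(lra)); pose proof (Hg2 h ltac:(lra)).
  pose proof (Rabs_triang (f h) (g h)); lra.
Qed.

Lemma little_o0_scal (k : R) (f : R -> R) : little_o0 f -> little_o0 (fun h => k * f h).
Proof.
  intros Hf eps Heps.
  destruct (Hf (eps / (Rabs k + 1))) as [d [Hd Hfd]].
  { apply Rdiv_lt_0_compat; [lra|]; pose proof (Rabs_pos k); lra. }
  exists d; split; [exact Hd|]; intros h Hh.
  pose proof (Rabs_pos k); pose proof (Rabs_pos h); pose proof (Hfd h Hh).
  rewrite Rabs_mult.
  apply Rle_trans with (Rabs k * (eps / (Rabs k + 1) * Rabs h));
    [apply Rmult_le_compat_l; lra|].
  replace (Rabs k * (eps / (Rabs k + 1) * Rabs h)) with (Rabs k / (Rabs k + 1) * (eps * Rabs h))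
    by (field; lra).
  assert (Rabs k / (Rabs k + 1) <= 1).
  { apply (Rmult_le_reg_r (Rabs k + 1)); [lra|].
    unfold Rdiv; rewrite Rmult_assoc, Rinv_l by lra; lra. }
  pose proof (Rmult_le_pos eps (Rabs h) ltac:(lra) ltac:(lra)); nra.
Qed.

Lemma little_o0_sub (f g : R -> R) :
  little_o0 f -> little_o0 g -> little_o0 (fun h => f h - g h).
Proof.
  intros Hf Hg; apply (little_o0_ext (fun h => f h + -1 * g h)); [intros; ring|].
  apply little_o0_add; [exact Hf | apply little_o0_scal, Hg].
Qed.

Lemma big_O0_of_little_o0 (f : R -> R) : little_o0 f -> big_O0 f.
Proof. intros Hf; destruct (Hf 1 Rlt_0_1) as [d Hd]; exists 1, d; exact Hd. Qed.

Lemma big_O0_ext (f g : R -> R) : (forall h, f h = g h) -> big_O0 f -> big_O0 g.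
Proof.
  intros E [K [d [Hd Hf]]]; exists K, d; split; [exact Hd|]; intros h Hh; rewrite <- E; auto.
Qed.

Lemma big_O0_linear (k : R) : big_O0 (fun h => k * h).
Proof.
  exists (Rabs k), 1; split; [lra|]; intros h _; rewrite Rabs_mult; lra.
Qed.

Lemma big_O0_scal (k : R) (f : R -> R) : big_O0 f -> big_O0 (fun h => k * f h).
Proof.
  intros [K [d [Hd Hf]]]; exists (Rabs k * K), d; split; [exact Hd|]; intros h Hh.
  rewrite Rabs_mult, Rmult_assoc; apply Rmult_le_compat_l; [apply Rabs_pos | auto].
Qed.

Lemma big_O0_sub (f g : R -> R) : big_O0 f -> big_O0 g -> big_O0 (fun h => f h - g h).
Proof.
  intros [K1 [d1 [Hd1 Hf]]] [K2 [d2 [Hd2 Hg]]].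
  exists (K1 + K2), (Rmin d1 d2); split; [apply Rmin_pos; lra|]; intros h Hh.
  pose proof (Rmin_l d1 d2); pose proof (Rmin_r d1 d2).
  pose proof (Hf h ltac:(lra)); pose proof (Hg h ltac:(lra)).
  pose proof (Rabs_triang (f h) (- g h)); rewrite Rabs_Ropp in *; unfold Rminus; lra.
Qed.

Lemma little_o0_sqr (f : R -> R) : big_O0 f -> little_o0 (fun h => f h ^ 2).
Proof.
  intros [K [d [Hd Hf]]] eps Heps.
  set (K' := Rabs K + 1).
  assert (HK' : 0 < K') by (unfold K'; pose proof (Rabs_pos K); lra).
  exists (Rmin d (eps / (K' * K'))); split.
  { apply Rmin_pos; [lra|]; apply Rdiv_lt_0_compat; nra. }
  intros h Hh.
  pose proof (Rmin_l d (eps / (K' * K'))); pose proof (Rmin_r d (eps / (K' * K'))).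
  assert (Hfh : Rabs (f h) <= K' * Rabs h).
  { pose proof (Hf h ltac:(lra)); pose proof (Rle_abs K); pose proof (Rabs_pos h).
    unfold K'; nra. }
  assert (Hh' : K' * K' * Rabs h <= eps).
  { apply Rle_trans with (K' * K' * (eps / (K' * K'))); [|right; field; lra].
    apply Rmult_le_compat_l; nra. }
  rewrite Rabs_right, <- pow2_abs by (apply Rle_ge, pow2_ge_0).
  pose proof (Rabs_pos (f h)); pose proof (Rabs_pos h).
  apply Rle_trans with ((K' * Rabs h) ^ 2); [apply pow_incr; lra|].
  replace ((K' * Rabs h) ^ 2) with (K' * K' * Rabs h * Rabs h) by ring.
  apply Rmult_le_compat_r; lra.
Qed.

Lemma little_o0_comp (f g : R -> R) :
  little_o0 f -> big_O0 g -> little_o0 (fun h => f (g h)).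
Proof.
  intros Hf [K [d [Hd Hg]]] eps Heps.
  set (K' := Rabs K + 1).
  assert (HK' : 0 < K') by (unfold K'; pose proof (Rabs_pos K); lra).
  destruct (Hf (eps / K') ltac:(apply Rdiv_lt_0_compat; lra)) as [d' [Hd' Hfd]].
  exists (Rmin d (d' / K')); split; [apply Rmin_pos; [lra | apply Rdiv_lt_0_compat; lra]|].
  intros h Hh.
  pose proof (Rmin_l d (d' / K')); pose proof (Rmin_r d (d' / K')).
  assert (Hgh : Rabs (g h) <= K' * Rabs h).
  { pose proof (Hg h ltac:(lra)); pose proof (Rle_abs K); pose proof (Rabs_pos h).
    unfold K'; nra. }
  assert (Hgd : Rabs (g h) < d').
  { apply Rle_lt_trans with (K' * Rabs h); [exact Hgh|].
    apply Rlt_le_trans with (K' * (d' / K')); [apply Rmult_lt_compat_l; lra|].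
    right; field; lra. }
  apply Rle_trans with (eps / K' * Rabs (g h)); [auto|].
  apply Rle_trans with (eps / K' * (K' * Rabs h)); [apply Rmult_le_compat_l; [|exact Hgh]|].
  - apply Rlt_le, Rdiv_lt_0_compat; lra.
  - right; field; lra.
Qed.

Lemma little_o0_of_derivable (f : R -> R) (x l : R) :
  derivable_pt_lim f x l -> little_o0 (fun h => f (x + h) - f x - l * h).
Proof.
  intros Hf eps Heps; destruct (Hf eps Heps) as [d Hd].
  exists d; split; [apply cond_pos|]; intros h Hh.
  destruct (Req_dec h 0) as [->|Hh0].
  - rewrite Rplus_0_r, Rabs_R0; replace (f x - f x - l * 0) with 0 by ring.
    rewrite Rabs_R0; lra.
  - replace (f (x + h) - f x - l * h) with (((f (x + h) - f x) / h - l) * h) by (field; auto).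
    rewrite Rabs_mult; apply Rmult_le_compat_r; [apply Rabs_pos|].
    left; apply Hd; auto.
Qed.

Lemma derivable_of_little_o0 (f : R -> R) (x l : R) :
  little_o0 (fun h => f (x + h) - f x - l * h) -> derivable_pt_lim f x l.
Proof.
  intros Hf eps Heps; destruct (Hf (eps / 2) ltac:(lra)) as [d [Hd Hfd]].
  exists (mkposreal d Hd); simpl; intros h Hh0 Hh.
  replace ((f (x + h) - f x) / h - l) with ((f (x + h) - f x - l * h) / h) by (field; auto).
  pose proof (Rabs_pos_lt h Hh0).
  unfold Rdiv; rewrite Rabs_mult, Rabs_inv.
  apply Rle_lt_trans with (eps / 2 * Rabs h * / Rabs h).
  - apply Rmult_le_compat_r; [left; apply Rinv_0_lt_compat; lra | auto].
  - replace (eps / 2 * Rabs h * / Rabs h) with (eps / 2) by (field; lra); lra.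
Qed.

Lemma derivable_pt_lim_affine (c k x : R) : derivable_pt_lim (fun h => c + k * h) x k.
Proof.
  apply derivable_of_little_o0, (little_o0_ext (fun h => 0 * (1 * h) ^ 2)); [intros; ring|].
  apply little_o0_scal, little_o0_sqr, big_O0_linear.
Qed.

Lemma derivable_pt_lim_of_shift (f g : R -> R) (x l : R) :
  (forall h, g (x + h) = f h) -> derivable_pt_lim f 0 l -> derivable_pt_lim g x l.
Proof.
  intros E Hf; apply derivable_of_little_o0.
  apply (little_o0_ext (fun h => f (0 + h) - f 0 - l * h)); [|apply little_o0_of_derivable, Hf].
  intros h; rewrite Rplus_0_l, E, <- (E 0), Rplus_0_r; reflexivity.
Qed.

(* [D] and [R1 R2 R3] stand for the increments of the retarded time and of r2
   along a line; the last term is quadratic in the increments. *)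
Lemma retarded_expansion (T0 al h D b1 b2 b3 e1 e2 e3 w1 w2 w3 R1 R2 R3 : R) :
  T0 <> 0 -> e1 ^ 2 + e2 ^ 2 + e3 ^ 2 = 1 ->
  (T0 + al * h - D) ^ 2
    = (T0 * e1 + b1 * h - R1) ^ 2 + (T0 * e2 + b2 * h - R2) ^ 2 + (T0 * e3 + b3 * h - R3) ^ 2 ->
  (1 - (e1 * w1 + e2 * w2 + e3 * w3)) * D - (al - (e1 * b1 + e2 * b2 + e3 * b3)) * h
  = e1 * (R1 - w1 * D) + e2 * (R2 - w2 * D) + e3 * (R3 - w3 * D)
    + / (2 * T0) * ((al * h - D) ^ 2 - ((b1 * h - R1) ^ 2 + (b2 * h - R2) ^ 2 + (b3 * h - R3) ^ 2)).
Proof.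
  intros HT He Hsq.
  apply (Rmult_eq_reg_l (2 * T0)); [|lra].
  rewrite Rmult_plus_distr_l, <- Rmult_assoc, Rinv_r, Rmult_1_l by lra.
  apply Rminus_diag_uniq.
  transitivity (- ((T0 + al * h - D) ^ 2 - ((T0 * e1 + b1 * h - R1) ^ 2
      + (T0 * e2 + b2 * h - R2) ^ 2 + (T0 * e3 + b3 * h - R3) ^ 2))
    - T0 ^ 2 * (e1 ^ 2 + e2 ^ 2 + e3 ^ 2 - 1)); [ring|].
  rewrite Hsq, He; ring.
Qed.

Definition jacF_directional_derivative (z u : R) (e w : R3) (al b1 b2 b3 : R) (i : nat) : R :=
  let ph := z * (al - (c1 e * b1 + c2 e * b2 + c3 e * b3)) in
  match i with
  | O => ph
  | 1%nat => al - ph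
  | 2%nat => u * (b1 - c1 w * ph) - u * (al - ph) * c1 e
  | _ => u * (b2 - c2 w * ph) - u * (al - ph) * c2 e
  end.

Section RetardedTimeAlongLine.

Variables (r2 v : R -> R3) (tau : R3 -> R -> R).
Hypothesis Hr1 : forall t, derivable_pt_lim (fun s => c1 (r2 s)) t (c1 (v t)).
Hypothesis Hr2 : forall t, derivable_pt_lim (fun s => c2 (r2 s)) t (c2 (v t)).
Hypothesis Hr3 : forall t, derivable_pt_lim (fun s => c3 (r2 s)) t (c3 (v t)).
Hypothesis Hv : forall t1, exists M, M < 1 /\ forall s, s <= t1 -> norm3 (v s) <= M.
Hypothesis Hret : is_retarded_time r2 tau.

Variables (t0 x1 x2 x3 al b1 b2 b3 : R).
Hypothesis HT : TF tau t0 x1 x2 x3 > 0.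

Local Notation s0 := (tauF tau t0 x1 x2 x3).
Local Notation T0 := (TF tau t0 x1 x2 x3).
Local Notation u := (uF tau t0 x1 x2 x3).
Local Notation e := (eF r2 tau t0 x1 x2 x3).
Local Notation z := (zF r2 v tau t0 x1 x2 x3).
Local Notation point h := (mkR3 (x1 + b1 * h) (x2 + b2 * h) (x3 + b3 * h)).
Local Notation tau_line h := (tau (point h) (t0 + al * h)).
Local Notation r2_incr cc h := (cc (r2 (tau_line h)) - cc (r2 s0)).

Lemma tau_line_0 : tau_line 0 = s0.
Proof. unfold tauF; f_equal; [f_equal|]; ring. Qed.

Lemma TF_eq_norm3 : T0 = norm3 (sub3 (mkR3 x1 x2 x3) (r2 s0)).
Proof. destruct (Hret (mkR3 x1 x2 x3) t0) as [_ E]; unfold TF, tauF; lra. Qed.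

Lemma TF_mul_eF :
  T0 * c1 e = x1 - c1 (r2 s0) /\ T0 * c2 e = x2 - c2 (r2 s0) /\ T0 * c3 e = x3 - c3 (r2 s0).
Proof. unfold eF, uF, scal3, sub3; cbn [c1 c2 c3]; repeat split; field; lra. Qed.

Lemma eF_sqr_sum : c1 e ^ 2 + c2 e ^ 2 + c3 e ^ 2 = 1.
Proof.
  destruct TF_mul_eF as [E1 [E2 E3]].
  apply (Rmult_eq_reg_l (T0 ^ 2)); [|apply pow_nonzero; lra].
  transitivity ((T0 * c1 e) ^ 2 + (T0 * c2 e) ^ 2 + (T0 * c3 e) ^ 2); [ring|].
  rewrite E1, E2, E3, Rmult_1_r, TF_eq_norm3; unfold norm3; rewrite pow2_sqrt by apply dot3_self_nonneg.
  unfold dot3, sub3; cbn [c1 c2 c3]; ring.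
Qed.

Lemma zF_denominator_pos : 0 < 1 - dot3 e (v s0).
Proof.
  assert (He : norm3 e = 1).
  { unfold norm3; replace (dot3 e e) with 1 by (rewrite <- eF_sqr_sum; unfold dot3; ring).
    apply sqrt_1. }
  destruct (Hv s0) as [M [HM1 HM]].
  pose proof (HM s0 (Rle_refl _)); pose proof (Rabs_dot3_le e (v s0)).
  pose proof (Rle_abs (dot3 e (v s0))); rewrite He in *; lra.
Qed.

Lemma tau_line_big_O0 : big_O0 (fun h => tau_line h - s0).
Proof.
  destruct (Hv (t0 + Rabs al)) as [M [HM1 HM]].
  exists ((Rabs al + norm3 (mkR3 b1 b2 b3)) / (1 - M)), 1; split; [lra|]; intros h Hh.
  destruct (Hret (point h) (t0 + al * h)) as [Hs_le Hs].
  destruct (Hret (mkR3 x1 x2 x3) t0) as [Hs0_le _].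
  set (s := tau_line h) in *.
  assert (Hpast : s <= t0 + Rabs al /\ s0 <= t0 + Rabs al).
  { pose proof (Rle_abs (al * h)); rewrite Rabs_mult in *.
    pose proof (Rabs_pos al); unfold tauF; split; nra. }
  set (p := sub3 (point h) (r2 s)) in *; set (q := sub3 (mkR3 x1 x2 x3) (r2 s0)).
  assert (Hpq : sub3 p q
    = sub3 (mkR3 (h * c1 (mkR3 b1 b2 b3)) (h * c2 (mkR3 b1 b2 b3)) (h * c3 (mkR3 b1 b2 b3)))
           (sub3 (r2 s) (r2 s0))).
  { unfold p, q, sub3; cbn [c1 c2 c3]; f_equal; ring. }
  assert (HD : s - s0 = al * h - (norm3 p - norm3 q)).
  { pose proof TF_eq_norm3 as HTq; fold q in HTq; unfold TF in HTq; lra. }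
  pose proof (Rabs_norm3_sub_le p q) as Hrev; rewrite Hpq in Hrev.
  pose proof (norm3_sub_le (mkR3 (h * c1 (mkR3 b1 b2 b3)) (h * c2 (mkR3 b1 b2 b3))
                                 (h * c3 (mkR3 b1 b2 b3))) (sub3 (r2 s) (r2 s0))).
  pose proof (norm3_scal_le h (mkR3 b1 b2 b3)).
  pose proof (norm3_sub_le_of_speed_le r2 v (t0 + Rabs al) M Hr1 Hr2 Hr3 HM s s0
                (proj1 Hpast) (proj2 Hpast)).
  assert (Hbound : Rabs (s - s0) <= (Rabs al + norm3 (mkR3 b1 b2 b3)) * Rabs h + M * Rabs (s - s0)).
  { rewrite HD at 1.
    pose proof (Rabs_triang (al * h) (- (norm3 p - norm3 q))).
    rewrite Rabs_Ropp, Rabs_mult in *; unfold Rminus at 1; lra. }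
  apply (Rmult_le_reg_l (1 - M)); [lra|].
  replace ((1 - M) * ((Rabs al + norm3 (mkR3 b1 b2 b3)) / (1 - M) * Rabs h))
    with ((Rabs al + norm3 (mkR3 b1 b2 b3)) * Rabs h) by (field; lra).
  lra.
Qed.

Lemma r2_incr_little_o0 (cc : R3 -> R) :
  (forall t, derivable_pt_lim (fun s => cc (r2 s)) t (cc (v t))) ->
  little_o0 (fun h => r2_incr cc h - cc (v s0) * (tau_line h - s0)).
Proof.
  intros Hcc.
  apply (little_o0_ext (fun h => (fun D => cc (r2 (s0 + D)) - cc (r2 s0) - cc (v s0) * D)
                                   (tau_line h - s0))).
  { intros h; cbv beta; replace (s0 + (tau_line h - s0)) with (tau_line h) by ring; reflexivity. }
  apply (little_o0_comp (fun D => cc (r2 (s0 + D)) - cc (r2 s0) - cc (v s0) * D));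
    [apply (little_o0_of_derivable (fun s => cc (r2 s))), Hcc | apply tau_line_big_O0].
Qed.

Lemma line_residual_big_O0 (cc : R3 -> R) (bk : R) :
  (forall t, derivable_pt_lim (fun s => cc (r2 s)) t (cc (v t))) ->
  big_O0 (fun h => bk * h - r2_incr cc h).
Proof.
  intros Hcc.
  apply (big_O0_ext (fun h => (bk * h - cc (v s0) * (tau_line h - s0))
                              - (r2_incr cc h - cc (v s0) * (tau_line h - s0)))); [intros; ring|].
  apply big_O0_sub; [apply big_O0_sub|].
  - apply big_O0_linear.
  - apply big_O0_scal, tau_line_big_O0.
  - apply big_O0_of_little_o0, r2_incr_little_o0, Hcc.
Qed.

Lemma retarded_line_sqr (h : R) :
  (T0 + al * h - (tau_line h - s0)) ^ 2
  = (T0 * c1 e + b1 * h - r2_incr c1 h) ^ 2 + (T0 * c2 e + b2 * h - r2_incr c2 h) ^ 2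
    + (T0 * c3 e + b3 * h - r2_incr c3 h) ^ 2.
Proof.
  destruct TF_mul_eF as [E1 [E2 E3]]; rewrite E1, E2, E3.
  destruct (Hret (point h) (t0 + al * h)) as [_ Hs].
  replace (T0 + al * h - (tau_line h - s0)) with (norm3 (sub3 (point h) (r2 (tau_line h))))
    by (unfold TF; lra).
  unfold norm3; rewrite pow2_sqrt by apply dot3_self_nonneg.
  unfold dot3, sub3; cbn [c1 c2 c3]; ring.
Qed.

Lemma tau_line_little_o0 :
  little_o0 (fun h => tau_line h - s0 - z * (al - (c1 e * b1 + c2 e * b2 + c3 e * b3)) * h).
Proof.
  pose proof zF_denominator_pos as Hc.
  apply (little_o0_ext (fun h => z *
    ((1 - (c1 e * c1 (v s0) + c2 e * c2 (v s0) + c3 e * c3 (v s0))) * (tau_line h - s0)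
     - (al - (c1 e * b1 + c2 e * b2 + c3 e * b3)) * h))).
  { intros h; unfold zF, dot3 in *; field; lra. }
  apply little_o0_scal, (little_o0_ext (fun h =>
      c1 e * (r2_incr c1 h - c1 (v s0) * (tau_line h - s0))
    + c2 e * (r2_incr c2 h - c2 (v s0) * (tau_line h - s0))
    + c3 e * (r2_incr c3 h - c3 (v s0) * (tau_line h - s0))
    + / (2 * T0) * ((al * h - (tau_line h - s0)) ^ 2
        - ((b1 * h - r2_incr c1 h) ^ 2 + (b2 * h - r2_incr c2 h) ^ 2
           + (b3 * h - r2_incr c3 h) ^ 2)))).
  { intros h; symmetry; apply retarded_expansion;
      [lra | apply eF_sqr_sum | apply retarded_line_sqr]. }
  apply little_o0_add; [apply little_o0_add; [apply little_o0_add|]|].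
  - apply little_o0_scal, r2_incr_little_o0, Hr1.
  - apply little_o0_scal, r2_incr_little_o0, Hr2.
  - apply little_o0_scal, r2_incr_little_o0, Hr3.
  - apply little_o0_scal, little_o0_sub;
      [|apply little_o0_add; [apply little_o0_add|]]; apply little_o0_sqr.
    + apply big_O0_sub; [apply big_O0_linear | apply tau_line_big_O0].
    + apply line_residual_big_O0, Hr1.
    + apply line_residual_big_O0, Hr2.
    + apply line_residual_big_O0, Hr3.
Qed.

Lemma tau_line_derivable :
  derivable_pt_lim (fun h => tau_line h) 0 (z * (al - (c1 e * b1 + c2 e * b2 + c3 e * b3))).
Proof.
  apply derivable_of_little_o0; eapply little_o0_ext; [|exact tau_line_little_o0].
  intros h; cbv beta; rewrite Rplus_0_l, tau_line_0; reflexivity.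
Qed.

Lemma eF_line_derivable (cc : R3 -> R) (yk bk : R) :
  (forall t, derivable_pt_lim (fun s => cc (r2 s)) t (cc (v t))) ->
  let ph := z * (al - (c1 e * b1 + c2 e * b2 + c3 e * b3)) in
  derivable_pt_lim (fun h => / (t0 + al * h - tau_line h) * (yk + bk * h - cc (r2 (tau_line h)))) 0
    (u * (bk - cc (v s0) * ph) - u * (al - ph) * (u * (yk - cc (r2 s0)))).
Proof.
  intros Hcc ph.
  assert (HN : derivable_pt_lim (fun h => yk + bk * h - cc (r2 (tau_line h))) 0
                 (bk - cc (v s0) * ph)).
  { apply (derivable_pt_lim_minus (fun h => yk + bk * h) (fun h => cc (r2 (tau_line h))));
      [apply derivable_pt_lim_affine|].
    apply (derivable_pt_lim_comp (fun h => tau_line h) (fun s => cc (r2 s)));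
      [apply tau_line_derivable|].
    rewrite tau_line_0; apply Hcc. }
  assert (HD : derivable_pt_lim (fun h => t0 + al * h - tau_line h) 0 (al - ph)).
  { apply (derivable_pt_lim_minus (fun h => t0 + al * h) (fun h => tau_line h));
      [apply derivable_pt_lim_affine | apply tau_line_derivable]. }
  assert (HD0 : t0 + al * 0 - tau_line 0 = T0).
  { rewrite tau_line_0; unfold TF; ring. }
  apply (derivable_pt_lim_ext (fun h => (yk + bk * h - cc (r2 (tau_line h)))
                                        / (t0 + al * h - tau_line h))).
  { intros h; unfold Rdiv; apply Rmult_comm. }
  replace (u * (bk - cc (v s0) * ph) - u * (al - ph) * (u * (yk - cc (r2 s0))))
    with (((bk - cc (v s0) * ph) * (t0 + al * 0 - tau_line 0)
           - (al - ph) * (yk + bk * 0 - cc (r2 (tau_line 0)))) / (t0 + al * 0 - tau_line 0)²).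
  - apply (derivable_pt_lim_div (fun h => yk + bk * h - cc (r2 (tau_line h)))
                                 (fun h => t0 + al * h - tau_line h));
      [exact HN | exact HD | rewrite HD0; lra].
  - rewrite HD0, tau_line_0; unfold uF, Rsqr; field; lra.
Qed.

Lemma jacF_line_derivable (i : nat) : (i < 4)%nat ->
  derivable_pt_lim
    (fun h => jacF r2 tau i (t0 + al * h) (x1 + b1 * h) (x2 + b2 * h) (x3 + b3 * h)) 0
    (jacF_directional_derivative z u e (v s0) al b1 b2 b3 i).
Proof.
  intros Hi; destruct i as [|[|[|[|i]]]]; [| | | | lia].
  - exact tau_line_derivable.
  - apply (derivable_pt_lim_minus (fun h => t0 + al * h) (fun h => tau_line h));
      [apply derivable_pt_lim_affine | apply tau_line_derivable].
  - exact (eF_line_derivable c1 x1 b1 Hr1).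
  - exact (eF_line_derivable c2 x2 b2 Hr2).
Qed.

End RetardedTimeAlongLine.

Definition axis (i k : nat) : R := if Nat.eqb i k then 1 else 0.

Lemma partial4_of_axis_derivable (g : R -> R -> R -> R -> R) (k : nat) (t x1 x2 x3 l : R) :
  (k < 4)%nat ->
  derivable_pt_lim
    (fun h => g (t + axis 0 k * h) (x1 + axis 1 k * h) (x2 + axis 2 k * h) (x3 + axis 3 k * h))
    0 l ->
  partial4 g k t x1 x2 x3 l.
Proof.
  intros Hk Hg; destruct k as [|[|[|[|k]]]]; [| | | | lia]; cbn [partial4];
    refine (derivable_pt_lim_of_shift _ _ _ _ _ Hg); intros h; unfold axis; cbn;
    f_equal; ring.
Qed.

Theorem mainTheorem6 (r2 v a j : R -> R3) (tau : R3 -> R -> R) :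
  admissible r2 v a j ->
  is_retarded_time r2 tau ->
  forall t x1 x2 x3 : R,
    TF tau t x1 x2 x3 > 0 ->
    exists J : nat -> nat -> R,
      (forall i k : nat, (i < 4)%nat -> (k < 4)%nat ->
         partial4 (jacF r2 tau i) k t x1 x2 x3 (J i k)) /\
      det4 J = zF r2 v tau t x1 x2 x3 * (uF tau t x1 x2 x3) ^ 2
               * c3 (eF r2 tau t x1 x2 x3).
Proof.
  intros [[Hr1 _] [[Hr2 _] [[Hr3 _] [_ [Hv _]]]]] Hret t x1 x2 x3 HT.
  exists (fun i k => jacF_directional_derivative (zF r2 v tau t x1 x2 x3) (uF tau t x1 x2 x3)
    (eF r2 tau t x1 x2 x3) (v (tauF tau t x1 x2 x3)) (axis 0 k) (axis 1 k) (axis 2 k) (axis 3 k) i).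
  split.
  - intros i k Hi Hk; apply partial4_of_axis_derivable; [exact Hk|].
    exact (jacF_line_derivable r2 v tau Hr1 Hr2 Hr3 Hv Hret t x1 x2 x3 _ _ _ _ HT i Hi).
  - unfold det4, det3, jacF_directional_derivative, axis; cbn [Nat.eqb]; ring.
Qed.
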